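(* Let $X$ be a finite alphabet, $L\subseteq X^*$ a regular language and $L^{\mathrm{rev}}$ its reversal. (a) The algebra $(Q,\delta_a,i)$ underlying the minimal deterministic automaton of $L$ (forgetting final states) is isomorphic to the dual $F$-algebra of the smallest subcoalgebra of $\mathsf{Reg}(X)$ containing $L^{\mathrm{rev}}$ (i.e. the smallest boolean subalgebra of $\mathsf{Reg}(X)$ containing $L^{\mathrm{rev}}$ and closed under all left derivatives $a^{-1}(-)$, with the restricted structure). (b) The $F$-algebra associated to the syntactic monoid $e_L:X^*\twoheadrightarrow\mathrm{Syn}(L)$ (states $\mathrm{Syn}(L)$, initial state the unit, transitions $m\mapsto m\cdot e_L(a)$) is isomorphic to the dual $F$-algebra of the smallest local variety of languages containing $L^{\mathrm{rev}}$.
   Context: $F$ is the endofunctor $FQ=1+X\times Q$ on $\mathbf{Set}$; an $F$-algebra is a triple $(Q,(\delta_a)_{a\in X},i)$ with maps $\delta_a:Q\to Q$ and an initial state $i\in Q$. $\overline{T}$ is the endofunctor $\overline{T}B=\{0,1\}\times B^X$ on boolean algebras; a $\overline{T}$-coalgebra is $(B,(\gamma_a)_{a\in X},f)$ with boolean homomorphisms $\gamma_a:B\to B$ and $f:B\to\{0,1\}$. The dual $F$-algebra of a finite $\overline{T}$-coalgebra $(B,\gamma_a,f)$ has as states the atoms of $B$, initial state the unique atom $z$ with $f(z)=1$, and a transition $z\xrightarrow{a}z'$ iff $z'$ is the unique atom with $\gamma_a(z')\geq z$ (this is a restriction of Stone duality, giving a dual equivalence between finite $\overline{T}$-coalgebras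 and finite $F$-algebras). $\mathsf{Reg}(X)$ is the boolean algebra of regular languages over $X$ made into a $\overline{T}$-coalgebra by $f(K)=1$ iff $\varepsilon\in K$ and $\gamma_a(K)=a^{-1}K=\{w: aw\in K\}$. A subcoalgebra of $\mathsf{Reg}(X)$ is a boolean subalgebra closed under all $a^{-1}(-)$. A local variety of languages is a subcoalgebra closed moreover under right derivatives $Ka^{-1}=\{w: wa\in K\}$. $L^{\mathrm{rev}}=\{a_n\cdots a_1: a_1\cdots a_n\in L\}$. The syntactic monoid of $L$ is $X^*/\!\sim$ with $u\sim v$ iff for all $x,y\in X^*$: $xuy\in L\Leftrightarrow xvy\in L$, and $e_L$ is the quotient map. *)

From Stdlib Require Import FunctionalExtensionality.
From Stdlib Require List.
From mathcomp Require Import all_boot.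
Set Implicit Arguments. Unset Strict Implicit. Unset Printing Implicit Defensive.

Section Lang.
Variable X : finType.

Definition lang := seq X -> bool.

Definition regular (K : lang) : Prop :=
  exists (Q : finType) (d : Q -> X -> Q) (q0 : Q) (F : pred Q),
    forall w, K w = F (foldl d q0 w).

Definition lang_rev (K : lang) : lang := fun w => K (rev w).

Definition lderiv (a : X) (K : lang) : lang := fun w => K (a :: w).
Definition rderiv (a : X) (K : lang) : lang := fun w => K (rcons w a).
Definition lquot (u : seq X) (K : lang) : lang := fun w => K (u ++ w).

Definition lang_empty : lang := fun _ => false.
Definition lang_compl (K : lang) : lang := fun w => ~~ K w.
Definition lang_union (K K' : lang) : lang := fun w => K w || K' w.
Definition lang_sub (K K' : lang) : Prop := forall w, K w -> K' w.

Definition bool_subalg (S : lang -> Prop) : Prop :=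
  [/\ forall K, S K -> regular K,
      S lang_empty,
      forall K, S K -> S (lang_compl K) &
      forall K K', S K -> S K' -> S (lang_union K K')].

Definition subcoalg (S : lang -> Prop) : Prop :=
  bool_subalg S /\ forall a K, S K -> S (lderiv a K).

Definition local_variety (S : lang -> Prop) : Prop :=
  subcoalg S /\ forall a K, S K -> S (rderiv a K).

Definition gen_subcoalg (K : lang) : lang -> Prop :=
  fun K' => forall S, subcoalg S -> S K -> S K'.
Definition gen_local_variety (K : lang) : lang -> Prop :=
  fun K' => forall S, local_variety S -> S K -> S K'.

Definition finite_family (B : lang -> Prop) : Prop :=
  exists s : list lang, forall K, B K -> List.In K s.

Definition atom (B : lang -> Prop) (z : lang) : Prop :=
  [/\ B z, z <> lang_empty &
      forall z', B z' -> lang_sub z' z -> z' = lang_empty \/ z' = z].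

(* Dual F-algebra of the finite coalgebra B: states are atoms;
   initial state = the unique atom z with f(z) = 1, i.e. [::] \in z;
   z -a-> z' iff z' is the unique atom with a^{-1} z' >= z. *)
Definition dual_init (B : lang -> Prop) (z : lang) : Prop :=
  [/\ atom B z, z [::] & forall z', atom B z' -> z' [::] -> z' = z].

Definition dual_trans (B : lang -> Prop) (a : X) (z z' : lang) : Prop :=
  [/\ atom B z', lang_sub z (lderiv a z') &
      forall z'', atom B z'' -> lang_sub z (lderiv a z'') -> z'' = z'].

Definition atoms (B : lang -> Prop) := {z : lang | atom B z}.

Definition min_state (L : lang) := {K : lang | exists u, K = lquot u L}.
Definition min_init (L : lang) : min_state L :=
  exist _ L (ex_intro _ [::] erefl).
Lemma min_delta_proof (L : lang) (a : X) (q : min_state L) :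
  exists u, lderiv a (sval q) = lquot u L.
Proof.
case: q => K [u Ku] /=; exists (rcons u a); rewrite Ku.
by apply: functional_extensionality => w; rewrite /lderiv /lquot cat_rcons.
Qed.
Definition min_delta (L : lang) (a : X) (q : min_state L) : min_state L :=
  exist _ (lderiv a (sval q)) (min_delta_proof a q).

(* Syntactic congruence and syntactic monoid Syn(L) = X^*/~ ;
   an element is represented by its ~-class (as a predicate on words). *)
Definition syneq (L : lang) (u v : seq X) : Prop :=
  forall x y, L (x ++ u ++ y) = L (x ++ v ++ y).
Definition syn_state (L : lang) :=
  {C : seq X -> Prop | exists u, C = syneq L u}.
Definition e_syn (L : lang) (u : seq X) : syn_state L :=
  exist _ (syneq L u) (ex_intro _ u erefl).
End Lang.

(* The two generated families sit inside the finite local variety of languages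
   recognised by the transition monoid of an automaton for L^rev, so both are
   finite boolean algebras.  The atoms of a finite boolean algebra B of
   languages are the classes of "no member of B separates x from y".  For the
   subcoalgebra generated by K := L^rev this relation is "wx \in K <-> wy \in K
   for all w", i.e. (rev x)^-1 L = (rev y)^-1 L; for the local variety it is the
   syntactic congruence of K, i.e. that of L up to reversal.  In both cases the
   dual transition of the atom of x under a is the atom of ax, which after
   reversal is u |-> ua. *)

From mathcomp Require Import all_boot boolp.
From Stdlib Require List.
Set Implicit Arguments. Unset Strict Implicit. Unset Printing Implicit Defensive.

Lemma mem_In (T : eqType) (x : T) (s : seq T) : x \in s -> List.In x s.
Proof. by elim: s => //= y s IH; rewrite inE => /predU1P [->|/IH]; [left | right]. Qed.

Section BooleanSubalgebra.
Variables (X : finType) (S : lang X -> Prop).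
Hypothesis S_subalg : bool_subalg S.

Lemma bool_subalg_full : S (fun _ => true).
Proof.
case: S_subalg => _ S0 SC _.
have -> : (fun _ => true) = lang_compl (@lang_empty X) by apply: funext.
exact: SC.
Qed.

Lemma bool_subalg_inter K M : S K -> S M -> S (fun w => K w && M w).
Proof.
case: S_subalg => _ _ SC SU SK SM.
have -> : (fun w => K w && M w) = lang_compl (lang_union (lang_compl K) (lang_compl M)).
  by apply: funext => w; rewrite /lang_compl /lang_union negb_or !negbK.
by apply/SC/SU; apply: SC.
Qed.

Lemma bool_subalg_agree (ks : seq (lang X)) x :
  (forall K, List.In K ks -> S K) -> S (fun y => List.forallb (fun K => K y == K x) ks).
Proof.
elim: ks => [|K ks IH] Sks /=; first exact: bool_subalg_full.
apply: bool_subalg_inter; last by apply: IH => M ksM; apply: Sks; right.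
have SK : S K by apply: Sks; left.
case: (K x).
- by have -> : (fun y => K y == true) = K by apply: funext => y; rewrite eqb_id.
- have -> : (fun y => K y == false) = lang_compl K by apply: funext => y; rewrite eqbF_neg.
  by case: S_subalg => _ _ SC _; apply: SC.
Qed.

End BooleanSubalgebra.

Section FiniteBooleanSubalgebra.
Variables (X : finType) (B : lang X -> Prop).

Definition indist (x y : seq X) : Prop := forall K, B K -> K x = K y.

Definition atom_of (x : seq X) : lang X := fun y => `[< indist x y >].

Lemma indist_sym x y : indist x y -> indist y x.
Proof. by move=> xy K BK; rewrite (xy K BK). Qed.

Lemma atom_of_self x : atom_of x x.
Proof. exact/asboolP. Qed.

Lemma atom_of_eq x y : atom_of x = atom_of y <-> indist x y.
Proof.
split=> xy; first by have := atom_of_self y; rewrite -xy => /asboolP.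
apply: funext => w; apply/asboolP/asboolP => xw K BK; rewrite -(xw K BK) (xy K BK) //.
Qed.

Lemma lang_nonempty (z : lang X) : z <> @lang_empty X -> exists y, z y.
Proof.
move=> z0; have [//|nz] := pselect (exists y, z y).
by case: z0; apply: funext => w; apply/negbTE/negP => zw; apply: nz; exists w.
Qed.

Lemma atom_nonempty z : atom B z -> exists y, z y.
Proof. by case=> _ /lang_nonempty. Qed.

Hypotheses (B_subalg : bool_subalg B) (B_fin : finite_family B).

(* Finiteness of [B] turns [atom_of x], a priori an infinite intersection,
   into a finite boolean combination of members of [B]. *)
Lemma atom_of_mem x : B (atom_of x).
Proof.
have [s Bs] := B_fin.
pose ks := List.filter (fun K => `[< B K >]) s.
have -> : atom_of x = fun y => List.forallb (fun K => K y == K x) ks.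
  apply: funext => y; apply/asboolP/idP => [xy | /List.forallb_forall xy K BK].
    apply List.forallb_forall => K /List.filter_In [_ /asboolP BK].
    by rewrite (xy K BK) eqxx.
  by apply/esym/eqP/xy/List.filter_In; split; [exact: Bs | exact/asboolP].
by apply: bool_subalg_agree => // K /List.filter_In [_ /asboolP].
Qed.

Lemma atom_of_atom x : atom B (atom_of x).
Proof.
split; first exact: atom_of_mem.
  by move/(congr1 (fun K => K x)); rewrite atom_of_self.
move=> z Bz zx; have [->|/lang_nonempty [y zy]] := pselect (z = @lang_empty X).
  by left.
right; apply: funext => w; apply/idP/idP => [/zx // | /asboolP xw].
have /asboolP xy := zx _ zy.
by rewrite -(xw _ Bz) (xy _ Bz).
Qed.

Lemma atomE z y : atom B z -> z y -> z = atom_of y.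
Proof.
case=> Bz _ zmin zy.
pose m := fun w => z w && atom_of y w.
have Bm : B m := bool_subalg_inter B_subalg Bz (atom_of_mem y).
have m0 : m <> @lang_empty X.
  by move/(congr1 (fun K => K y)); rewrite /m zy atom_of_self.
have [_ _ ymin] := atom_of_atom y.
have [//|mz] := zmin m Bm (fun w => fun mw => (andP mw).1).
have [//|my] := ymin m Bm (fun w => fun mw => (andP mw).2).
by rewrite -mz my.
Qed.

Lemma dual_init_atom_of : dual_init B (atom_of [::]).
Proof.
split; [exact: atom_of_atom | exact: atom_of_self |].
by move=> z az z0; apply: atomE.
Qed.

Hypothesis B_lderiv : forall a K, B K -> B (lderiv a K).

Lemma dual_trans_atom_of a x : dual_trans B a (atom_of x) (atom_of (a :: x)).
Proof.
split; first exact: atom_of_atom.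
  by move=> y /asboolP xy; apply/asboolP => K BK; apply: xy (B_lderiv a BK).
by move=> z az sub; apply: atomE az (sub _ (atom_of_self x)).
Qed.

Variables (St : Type) (st : seq X -> St).
Hypothesis st_surj : forall s, exists u, st u = s.
Hypothesis st_eqE : forall u v, st u = st v <-> indist (rev u) (rev v).

Theorem dual_algebra_iso :
  exists phi : St -> atoms B,
    [/\ bijective phi, dual_init B (sval (phi (st [::]))) &
        forall a u, dual_trans B a (sval (phi (st u))) (sval (phi (st (rcons u a))))].
Proof.
pose rep s := sval (cid (st_surj s)).
have st_rep s : st (rep s) = s := svalP (cid (st_surj s)).
pose phi s : atoms B := exist _ (atom_of (rev (rep s))) (atom_of_atom _).
have phi_st u : sval (phi (st u)) = atom_of (rev u).
  by apply/atom_of_eq/st_eqE; rewrite st_rep.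
exists phi; split; last 2 first.
- by rewrite phi_st; exact: dual_init_atom_of.
- by move=> a u; rewrite !phi_st rev_rcons; exact: dual_trans_atom_of.
pose psi (z : atoms B) : St := st (rev (sval (cid (atom_nonempty (svalP z))))).
exists psi => [s | [z az]]; rewrite /psi; case: cid => y /=.
  move=> /asboolP ry; rewrite -[RHS]st_rep; apply/st_eqE.
  by rewrite revK; exact: indist_sym.
move=> zy; move: (phi _) (phi_st (rev y)) => [z' az'] /= z'E.
by apply: eq_exist; rewrite z'E revK; exact/esym/atomE.
Qed.

End FiniteBooleanSubalgebra.

Section GeneratedFamilies.
Variable X : finType.
Implicit Types (S : lang X -> Prop) (K : lang X) (x y u v : seq X).

Lemma finite_family_sub (A B : lang X -> Prop) :
  finite_family B -> (forall K, A K -> B K) -> finite_family A.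
Proof. by case=> s Bs AB; exists s => K /AB /Bs. Qed.

Lemma subcoalg_lquot S u K : subcoalg S -> S K -> S (lquot u K).
Proof.
elim: u K => [|a u IH] K Ssc SK; first exact: SK.
exact: IH (Ssc.2 a K SK).
Qed.

Lemma local_variety_quot S u v K :
  local_variety S -> S K -> S (fun y => K (u ++ y ++ v)).
Proof.
move=> Slv SK; elim/last_ind: v K SK => [|v a IH] K SK.
  have -> : (fun y => K (u ++ y ++ [::])) = lquot u K.
    by apply: funext => y; rewrite cats0.
  exact: subcoalg_lquot Slv.1 SK.
have -> : (fun y => K (u ++ y ++ rcons v a)) = (fun y => rderiv a K (u ++ y ++ v)).
  by apply: funext => y; rewrite /rderiv -!rcons_cat.
exact/IH/Slv.2.
Qed.

Definition lang_invariant (R : seq X -> seq X -> Prop) K :=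
  forall x y, R x y -> K x = K y.

Section Invariant.
Variables (S : lang X -> Prop) (R : seq X -> seq X -> Prop).
Hypothesis R_cons : forall a x y, R x y -> R (a :: x) (a :: y).

Lemma subcoalg_invariant :
  subcoalg S -> subcoalg (fun K => S K /\ lang_invariant R K).
Proof.
case=> [[Sreg S0 SC SU] Sl]; split; first split.
- by move=> K [/Sreg].
- by split.
- by move=> K [SK KR]; split=> [|x y /KR]; [exact: SC | rewrite /lang_compl => ->].
- move=> K M [SK KR] [SM MR]; split=> [|x y xy]; first exact: SU.
  by rewrite /lang_union (KR _ _ xy) (MR _ _ xy).
- by move=> a K [SK KR]; split=> [|x y /(R_cons a)/KR]; first exact: Sl.
Qed.

Hypothesis R_rcons : forall a x y, R x y -> R (rcons x a) (rcons y a).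

Lemma local_variety_invariant :
  local_variety S -> local_variety (fun K => S K /\ lang_invariant R K).
Proof.
case=> Ssc Sr; split; first exact: subcoalg_invariant.
by move=> a K [SK KR]; split=> [|x y /(R_rcons a)/KR]; first exact: Sr.
Qed.

End Invariant.

Lemma gen_subcoalg_subcoalg S0 K0 :
  subcoalg S0 -> S0 K0 -> subcoalg (gen_subcoalg K0).
Proof.
move=> S0sc S0K0; split; first split.
- by move=> K /(_ S0 S0sc S0K0); case: S0sc => -[Sreg _ _ _] _ /Sreg.
- by move=> S [[]].
- by move=> K gK S Ssc SK; case: (Ssc) => -[_ _ SC _] _; apply: SC; exact: gK.
- move=> K M gK gM S Ssc SK; case: (Ssc) => -[_ _ _ SU] _.
  by apply: SU; [exact: gK | exact: gM].
- by move=> a K gK S Ssc SK; apply: Ssc.2; exact: gK.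
Qed.

Lemma gen_local_variety_local_variety S0 K0 :
  local_variety S0 -> S0 K0 -> local_variety (gen_local_variety K0).
Proof.
move=> S0lv S0K0; split; first split; first split.
- by move=> K /(_ S0 S0lv S0K0); case: S0lv => -[[Sreg _ _ _] _] _ /Sreg.
- by move=> S [[[]]].
- by move=> K gK S Slv SK; case: (Slv) => -[[_ _ SC _] _] _; apply: SC; exact: gK.
- move=> K M gK gM S Slv SK; case: (Slv) => -[[_ _ _ SU] _] _.
  by apply: SU; [exact: gK | exact: gM].
- by move=> a K gK S Slv SK; apply: Slv.1.2; exact: gK.
- by move=> a K gK S Slv SK; apply: Slv.2; exact: gK.
Qed.

Definition suffix_equiv K x y := forall w, K (w ++ x) = K (w ++ y).

Lemma indist_gen_subcoalg S0 K0 x y : subcoalg S0 -> S0 K0 ->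
  indist (gen_subcoalg K0) x y <-> suffix_equiv K0 x y.
Proof.
move=> S0sc S0K0; have gsc := gen_subcoalg_subcoalg S0sc S0K0.
have gK0 : gen_subcoalg K0 K0 by move=> S _.
split=> [xy w | xy K gK]; first exact: xy _ (subcoalg_lquot w gsc gK0).
have R_cons a u v : suffix_equiv K0 u v -> suffix_equiv K0 (a :: u) (a :: v).
  by move=> uv w; rewrite -!cat_rcons.
have [_ K_inv] := gK _ (subcoalg_invariant R_cons gsc) (conj gK0 (fun u v uv => uv [::])).
exact: K_inv.
Qed.

Lemma indist_gen_local_variety S0 K0 x y : local_variety S0 -> S0 K0 ->
  indist (gen_local_variety K0) x y <-> syneq K0 x y.
Proof.
move=> S0lv S0K0; have glv := gen_local_variety_local_variety S0lv S0K0.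
have gK0 : gen_local_variety K0 K0 by move=> S _.
split=> [xy u v | xy K gK]; first exact: xy _ (local_variety_quot u v glv gK0).
have R_cons a u v : syneq K0 u v -> syneq K0 (a :: u) (a :: v).
  by move=> uv p q; rewrite -!cat_rcons.
have R_rcons a u v : syneq K0 u v -> syneq K0 (rcons u a) (rcons v a).
  by move=> uv p q; rewrite !cat_rcons.
have K0R : lang_invariant (syneq K0) K0 by move=> u v /(_ [::] [::]); rewrite !cats0.
have [_ K_inv] := gK _ (local_variety_invariant R_cons R_rcons glv) (conj gK0 K0R).
exact: K_inv.
Qed.

End GeneratedFamilies.

Section Regular.
Variable X : finType.
Implicit Types (K : lang X) (u v w : seq X).

(* The reversed automaton is again deterministic on sets of states: after
   reading [w] it sits in the set of states from which [rev w] is accepted. *)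
Lemma regular_rev K : regular K -> regular (lang_rev K).
Proof.
case=> Q [d [q0 [F KE]]].
pose dr (A : {set Q}) a := [set q | d q a \in A].
exists {set Q}, dr, [set q | F q], (fun A : {set Q} => q0 \in A).
move=> w; suff -> : foldl dr [set q | F q] w =
                    [set q | F (foldl d q (rev w))] by rewrite inE /lang_rev KE.
elim/last_ind: w => [|w a IH]; first by apply/setP => q; rewrite !inE.
by rewrite foldl_rcons IH; apply/setP => q; rewrite !inE rev_rcons.
Qed.

Section TransitionMonoid.
Variables (Q : finType) (d : Q -> X -> Q).

Definition transf w : {ffun Q -> Q} := [ffun q => foldl d q w].

Definition transf_lang K : Prop :=
  exists G : {set {ffun Q -> Q}}, K = fun w => transf w \in G.

Lemma transf_cons a w : transf (a :: w) = [ffun q => transf w (d q a)].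
Proof. by apply/ffunP => q; rewrite !ffunE. Qed.

Lemma transf_rcons a w : transf (rcons w a) = [ffun q => d (transf w q) a].
Proof. by apply/ffunP => q; rewrite !ffunE foldl_rcons. Qed.

Lemma transf_lang_regular K : transf_lang K -> regular K.
Proof.
pose step (g : {ffun Q -> Q}) a := [ffun q => d (g q) a].
case=> G ->; exists {ffun Q -> Q}, step, (transf [::]), (mem G).
move=> w; congr (_ \in G); elim/last_ind: w => [|w a IH] //.
by rewrite foldl_rcons -IH transf_rcons.
Qed.

Lemma transf_lang_local_variety : local_variety transf_lang.
Proof.
split; first split; first split.
- exact: transf_lang_regular.
- by exists set0; apply: funext => w; rewrite inE.
- by move=> _ [G ->]; exists (~: G); apply: funext => w; rewrite inE.
- by move=> _ _ [G ->] [H ->]; exists (G :|: H); apply: funext => w; rewrite inE.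
- move=> a _ [G ->]; exists [set g : {ffun Q -> Q} | [ffun q => g (d q a)] \in G].
  by apply: funext => w; rewrite inE /lderiv transf_cons.
- move=> a _ [G ->]; exists [set g : {ffun Q -> Q} | [ffun q => d (g q) a] \in G].
  by apply: funext => w; rewrite inE /rderiv transf_rcons.
Qed.

Lemma transf_lang_finite : finite_family transf_lang.
Proof.
pose lang_of (G : {set {ffun Q -> Q}}) w := transf w \in G.
exists (map lang_of (enum {set {ffun Q -> Q}})).
by move=> _ [G ->]; apply/List.in_map/mem_In; rewrite mem_enum.
Qed.

End TransitionMonoid.

Lemma regular_finite_local_variety K : regular K ->
  exists B, [/\ local_variety B, finite_family B & B K].
Proof.
case=> Q [d [q0 [F KE]]]; exists (transf_lang d).
split; [exact: transf_lang_local_variety | exact: transf_lang_finite |].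
by exists [set g : {ffun Q -> Q} | F (g q0)]; apply: funext => w; rewrite KE inE ffunE.
Qed.

End Regular.

Section MinimalAutomatonAndSyntacticMonoid.
Variables (X : finType) (L : lang X).
Implicit Types (u v : seq X).

Definition min_state_of u : min_state L := exist _ (lquot u L) (ex_intro _ u erefl).

Lemma min_state_of_surj (q : min_state L) : exists u, min_state_of u = q.
Proof. by case: q => K [u Ku]; exists u; apply: eq_exist. Qed.

Lemma min_init_of : min_init L = min_state_of [::].
Proof. exact: eq_exist. Qed.

Lemma min_delta_of a u : min_delta a (min_state_of u) = min_state_of (rcons u a).
Proof. by apply: eq_exist; apply: funext => w; rewrite /lderiv /lquot cat_rcons. Qed.

Lemma min_state_ofE u v :
  min_state_of u = min_state_of v <-> suffix_equiv (lang_rev L) (rev u) (rev v).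
Proof.
split=> [/(congr1 sval) /= uv w | uv].
  by move: (congr1 (fun K => K (rev w)) uv); rewrite /lang_rev /lquot !rev_cat !revK.
apply: eq_exist; apply: funext => w.
by move: (uv (rev w)); rewrite /lang_rev /lquot !rev_cat !revK.
Qed.

Lemma syneq_rev K u v : syneq K u v -> syneq (lang_rev K) (rev u) (rev v).
Proof. by move=> uv p q; rewrite /lang_rev !rev_cat !revK -!catA. Qed.

Lemma e_synE u v : e_syn L u = e_syn L v <-> syneq (lang_rev L) (rev u) (rev v).
Proof.
have revrevL : lang_rev (lang_rev L) = L by apply: funext => w; rewrite /lang_rev revK.
split=> [/(congr1 sval) /= uv | /syneq_rev].
  by apply: syneq_rev; rewrite uv => p q.
rewrite !revK revrevL => uv; apply: eq_exist; apply: funext => w.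
by apply: propext; split=> h p q; rewrite -h uv.
Qed.

Lemma e_syn_surj (m : syn_state L) : exists u, e_syn L u = m.
Proof. by case: m => C [u Cu]; exists u; apply: eq_exist. Qed.

End MinimalAutomatonAndSyntacticMonoid.

Theorem mainTheorem13 (X : finType) (L : lang X) (HL : regular L) :
  (finite_family (gen_subcoalg (lang_rev L)) /\
   exists phi : min_state L -> atoms (gen_subcoalg (lang_rev L)),
     [/\ bijective phi,
         dual_init (gen_subcoalg (lang_rev L)) (sval (phi (min_init L))) &
         forall (a : X) (q : min_state L),
           dual_trans (gen_subcoalg (lang_rev L)) a
             (sval (phi q)) (sval (phi (min_delta a q)))])
  /\
  (finite_family (gen_local_variety (lang_rev L)) /\
   exists psi : syn_state L -> atoms (gen_local_variety (lang_rev L)),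
     [/\ bijective psi,
         dual_init (gen_local_variety (lang_rev L)) (sval (psi (e_syn L [::]))) &
         forall (a : X) (u : seq X),
           dual_trans (gen_local_variety (lang_rev L)) a
             (sval (psi (e_syn L u))) (sval (psi (e_syn L (rcons u a))))]).
Proof.
have [B [Blv Bfin BLr]] := regular_finite_local_variety (regular_rev HL).
have [gsc_subalg gsc_lderiv] := gen_subcoalg_subcoalg Blv.1 BLr.
have [[glv_subalg glv_lderiv] _] := gen_local_variety_local_variety Blv BLr.
have gsc_fin := finite_family_sub Bfin (fun K gK => gK B Blv.1 BLr).
have glv_fin := finite_family_sub Bfin (fun K gK => gK B Blv BLr).
split; split=> //.
- have min_stateE u v : min_state_of L u = min_state_of L v <->
      indist (gen_subcoalg (lang_rev L)) (rev u) (rev v).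
    by rewrite (indist_gen_subcoalg _ _ Blv.1 BLr); exact: min_state_ofE.
  have [phi [phi_bij phi_init phi_trans]] :=
    dual_algebra_iso gsc_subalg gsc_fin gsc_lderiv (@min_state_of_surj _ L) min_stateE.
  exists phi; split; rewrite ?min_init_of //.
  by move=> a q; have [u <-] := min_state_of_surj q; rewrite min_delta_of.
- have e_synE_indist u v : e_syn L u = e_syn L v <->
      indist (gen_local_variety (lang_rev L)) (rev u) (rev v).
    by rewrite (indist_gen_local_variety _ _ Blv BLr); exact: e_synE.
  exact: (dual_algebra_iso glv_subalg glv_fin glv_lderiv (@e_syn_surj _ L) e_synE_indist).
Qed.
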